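(* Let $S=(N,M_0)$ be a non-trivial, strongly connected H1S-WMG$_\le$ system with incidence matrix $I$, such that deleting the shared place (if any) yields a strongly connected WMG$_\le$. Then $S$ is live if and only if there is no pair $(M,Y)$ with $M\in\mathbb{N}^P$, $Y\in\mathbb{N}^T$, $M=M_0+I\cdot Y$, such that $M$ enables no transition of $N$.
   Context: A Petri net is $N=(P,T,W)$ with finite disjoint sets $P$, $T$ and weights $W:(P\times T)\cup(T\times P)\to\mathbb{N}$; incidence matrix $I(p,t)=W(t,p)-W(p,t)$. Non-trivial means $P$ and $T$ are non-empty. Strongly connected means the bipartite directed graph with vertices $P\cup T$ and an arc $(x,y)$ whenever $W(x,y)>0$ is strongly connected. Transition $t$ is enabled at $M$ if $M(p)\ge W(p,t)$ for all $p$; firing yields $M+I[\cdot,t]$. A system is live if for every transition $t$ and every reachable marking $M'$ some marking reachable from $M'$ enables $t$. A place is shared if it has at least two output transitions; the net is homogeneous if for each place all its output weights are equal. An H1S-WMG$_\le$ is a homogeneous net with at most one shared place such that deleting the shared place (if any) and its adjacent arcs (keeping all transitions) yields a WMG$_\le$, i.e. a net in which every place has at most one input and at most one output transition. *)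

From mathcomp Require Import all_boot all_order all_algebra.
Set Implicit Arguments. Unset Strict Implicit. Unset Printing Implicit Defensive.
Import GRing.Theory Num.Theory.

(* A Petri net N = (P, T, W): places P and transitions T are finite types;
   W is split into Wpre p t = W(p,t) and Wpost t p = W(t,p). *)
Section PetriNet.
Variables (P T : finType) (Wpre : P -> T -> nat) (Wpost : T -> P -> nat).

Definition incidence (p : P) (t : T) : int := (Wpost t p)%:Z - (Wpre p t)%:Z.

Definition nontrivial : Prop := 0 < #|P| /\ 0 < #|T|.

Definition net_arc (keep : pred P) : rel (P + T) := fun x y =>
  match x, y with
  | inl p, inr t => keep p && (0 < Wpre p t)
  | inr t, inl p => keep p && (0 < Wpost t p)
  | _, _ => false
  end.

Definition kept_vertex (keep : pred P) (x : P + T) : bool :=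
  match x with inl p => keep p | inr _ => true end.

Definition strongly_connected_on (keep : pred P) : Prop :=
  forall x y : P + T, kept_vertex keep x -> kept_vertex keep y ->
    connect (net_arc keep) x y.

Definition strongly_connected : Prop := strongly_connected_on predT.

Definition outputs (p : P) : {set T} := [set t | 0 < Wpre p t].
Definition inputs (p : P) : {set T} := [set t | 0 < Wpost t p].

Definition shared (p : P) : bool := 1 < #|outputs p|.

Definition homogeneous : Prop :=
  forall p t1 t2, t1 \in outputs p -> t2 \in outputs p -> Wpre p t1 = Wpre p t2.

(* Deleting the shared place (if any) yields a WMG_<=: every non-shared place
   has at most one input and at most one output transition. *)
Definition H1S_WMG_le : Prop :=
  [/\ homogeneous,
      #|[set p | shared p]| <= 1 &
      forall p, ~~ shared p -> (#|inputs p| <= 1) && (#|outputs p| <= 1)].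

Definition enabled (M : P -> nat) (t : T) : bool := [forall p, Wpre p t <= M p].

Definition fire (M : P -> nat) (t : T) : P -> nat :=
  fun p => M p - Wpre p t + Wpost t p.

Inductive reachable (M : P -> nat) : (P -> nat) -> Prop :=
  | reach_refl : reachable M M
  | reach_step : forall M' t, reachable M M' -> enabled M' t ->
                 reachable M (fire M' t).

Definition live (M0 : P -> nat) : Prop :=
  forall t M', reachable M0 M' -> exists2 M'', reachable M' M'' & enabled M'' t.

End PetriNet.

(* A solution (M, Y) of the state equation with M dead can be approached by
   firing greedily from M0 the transitions still owed by Y; this reaches a
   marking M1 from which only a residual Z, made of disabled transitions, is
   missing.  Because every non-shared place has a single input and a single
   output transition and the shared place is homogeneous, either M1 is dead or
   the support of Z is disabled by places that only Z itself can refill, so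
   some transition is dead forever and the system is not live.
   Conversely, if a transition t is never enabled again, its firing count
   stays 0; across a place with a single input transition, a bound on the
   firing count of that input bounds the count of every output, so by strong
   connectivity of the net without the shared place all firing counts are
   bounded.  Every run therefore ends in a dead marking, which solves the
   state equation. *)
From mathcomp Require Import all_boot all_order all_algebra.
From mathcomp Require Import zify.
From Stdlib Require Import Classical.
Import GRing.Theory.
Set Implicit Arguments. Unset Strict Implicit. Unset Printing Implicit Defensive.

Lemma connect_preserved (V : finType) (e : rel V) (Q : V -> Prop) x y :
  (forall a b, e a b -> Q a -> Q b) -> connect e x y -> Q x -> Q y.
Proof.
move=> eQ /connectP [s pth ->]; elim: s x pth => //= z s IH x /andP [exz pth] Qx.
exact: IH pth (eQ _ _ exz Qx).
Qed.

Lemma sum_mul_add_delta (T : finType) (f X : T -> nat) t :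
  \sum_y f y * (X y + (y == t)) = \sum_y f y * X y + f t.
Proof.
under eq_bigr do rewrite mulnDr.
rewrite big_split /=; congr (_ + _).
by rewrite (bigD1 t) //= eqxx muln1 big1 ?addn0 // => y /negbTE ->; rewrite muln0.
Qed.

Lemma sum_add_delta (T : finType) (X : T -> nat) t :
  \sum_y (X y + (y == t)) = \sum_y X y + 1.
Proof.
rewrite big_split /=; congr (_ + _).
by rewrite (bigD1 t) //= eqxx big1 ?addn0 // => y /negbTE ->.
Qed.

Lemma leq_sum_term (T : finType) (f : T -> nat) u : f u <= \sum_y f y.
Proof. by rewrite (bigD1 u) //= leq_addr. Qed.

Lemma sum_mul_support1 (T : finType) (f Z : T -> nat) t :
  (forall y, 0 < f y -> y = t) -> \sum_y f y * Z y = f t * Z t.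
Proof.
move=> supp_f; rewrite (bigD1 t) //= big1 ?addn0 // => y ne_yt.
by case: (posnP (f y)) => [-> // | /supp_f eq_yt]; rewrite eq_yt eqxx in ne_yt.
Qed.

Section PetriNet.
Variables (P T : finType) (Wpre : P -> T -> nat) (Wpost : T -> P -> nat).

Local Notation enabled := (enabled Wpre).
Local Notation fire := (fire Wpre Wpost).
Local Notation reachable := (reachable Wpre Wpost).
Local Notation live := (live Wpre Wpost).
Local Notation shared := (shared Wpre).
Local Notation inputs := (inputs Wpost).
Local Notation outputs := (outputs Wpre).

Definition dead (M : P -> nat) : Prop := forall t, ~~ enabled M t.

Lemma enabledPn M t : reflect (exists p, M p < Wpre p t) (~~ enabled M t).
Proof.
rewrite negb_forall; apply: (iffP existsP) => -[p lt]; exists p; first by rewrite ltnNge.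
by rewrite -ltnNge.
Qed.

Lemma shared_eq p s : #|[set p | shared p]| <= 1 -> shared p -> shared s -> p = s.
Proof. by move=> /card_le1_eqP one sp ss; apply: one; rewrite inE. Qed.

Lemma outflow_single p u (Z : T -> nat) : #|outputs p| <= 1 -> 0 < Wpre p u ->
  \sum_t Wpre p t * Z t = Wpre p u * Z u.
Proof.
move=> /card_le1_eqP out1 pu; apply: sum_mul_support1 => y py.
by apply: out1; rewrite inE.
Qed.

Lemma inflow_single p u (Z : T -> nat) : #|inputs p| <= 1 -> 0 < Wpost u p ->
  \sum_t Wpost t p * Z t = Wpost u p * Z u.
Proof.
move=> /card_le1_eqP in1 up; apply: sum_mul_support1 => y yp.
by apply: in1; rewrite inE.
Qed.

Lemma reachable_trans M1 M2 M3 : reachable M1 M2 -> reachable M2 M3 -> reachable M1 M3.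
Proof. by move=> r12; elim=> // M t _ r13 en; apply: reach_step r13 en. Qed.

Lemma reachable_fire M t M' : enabled M t -> reachable (fire M t) M' -> reachable M M'.
Proof. by move=> en; apply: reachable_trans; apply: reach_step (reach_refl _ _ _) en. Qed.

(* [X] is the Parikh vector of the firing sequence: it counts the firings of
   each transition. *)
Inductive parikh_reach (M : P -> nat) : (P -> nat) -> (T -> nat) -> Prop :=
  | parikh_refl : parikh_reach M M (fun _ => 0)
  | parikh_step M' X t : parikh_reach M M' X -> enabled M' t ->
      parikh_reach M (fire M' t) (fun u => X u + (u == t)).

Lemma parikh_reachable M M' X : parikh_reach M M' X -> reachable M M'.
Proof. by elim=> [|M1 X1 t _ r en]; [apply: reach_refl | apply: reach_step r en]. Qed.

Lemma reachable_parikh M M' : reachable M M' -> exists X, parikh_reach M M' X.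
Proof.
elim=> [|M1 t _ [X1 r] en]; first by exists (fun _ => 0); apply: parikh_refl.
by exists (fun u => X1 u + (u == t)); apply: parikh_step r en.
Qed.

(* The state equation M = M0 + I Y, with the negative part of the incidence
   moved to the left so that no subtraction occurs. *)
Definition state_equation (M0 : P -> nat) (Y : T -> nat) (M : P -> nat) : Prop :=
  forall p, M p + \sum_t Wpre p t * Y t = M0 p + \sum_t Wpost t p * Y t.

Lemma parikh_state_equation M M' X : parikh_reach M M' X -> state_equation M X M'.
Proof.
elim=> [|M1 X1 t _ eqX /forallP en] p.
  by rewrite !big1 // => t _; rewrite muln0.
by rewrite !sum_mul_add_delta /fire; have := eqX p; have := en p; lia.
Qed.

Lemma state_equation_greedy M0 Y M : state_equation M0 Y M ->
  exists M1 Z, [/\ reachable M0 M1, state_equation M1 Z M &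
                   forall u, 0 < Z u -> ~~ enabled M1 u].
Proof.
move: {2}(\sum_t Y t) (leqnn (\sum_t Y t)) => n.
elim: n M0 Y => [|n IH] M0 Y sumY eqY.
  exists M0, Y; split=> [||u Yu]; [exact: reach_refl | by [] |].
  by have := leq_sum_term Y u; lia.
have [/existsP [u /andP [Yu en]] | /existsPn idle] :=
  boolP [exists u, (0 < Y u) && enabled M0 u]; last first.
  exists M0, Y; split=> [||v Yv]; [exact: reach_refl | by [] |].
  by have := idle v; rewrite Yv.
pose Y' x := Y x - (x == u).
have Y_split x : Y x = Y' x + (x == u).
  by rewrite /Y'; case: eqP => [->|_]; rewrite /= ?subn0 ?addn0 ?subnK.
have sumY' f : \sum_t f t * Y t = \sum_t f t * Y' t + f u.
  by rewrite -sum_mul_add_delta; apply: eq_bigr => x _; rewrite Y_split.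
have [M1 [Z [r1 eqZ blockedZ]]] : exists M1 Z, [/\ reachable (fire M0 u) M1,
    state_equation M1 Z M & forall v, 0 < Z v -> ~~ enabled M1 v].
  apply: (IH _ Y').
    by move: sumY; rewrite (eq_bigr _ (fun x _ => Y_split x)) sum_add_delta; lia.
  move=> p; have := eqY p; rewrite !sumY' /fire; move/forallP: en => /(_ p); lia.
by exists M1, Z; split=> //; apply: reachable_fire en r1.
Qed.

(* Every transition of [D] is disabled by a place that only transitions of [D]
   can refill, so no transition of [D] can ever fire again. *)
Definition starved (M : P -> nat) (D : pred T) : Prop :=
  forall u, D u -> exists2 p, M p < Wpre p u & forall t, 0 < Wpost t p -> D t.

Lemma starved_reachable M M' D : starved M D -> reachable M M' -> starved M' D.
Proof.
move=> sD; elim=> // M1 t _ sD1 /forallP en u Du.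
have Dt : ~~ D t.
  by apply/negP => /sD1 [p lt _]; have := en p; rewrite leqNgt lt.
have [p lt refill] := sD1 u Du; exists p => //.
suff W0 : Wpost t p = 0 by rewrite /fire W0 addn0; lia.
by case: (posnP (Wpost t p)) => // /refill Dt'; rewrite Dt' in Dt.
Qed.

Lemma starved_not_live M0 M D u : live M0 -> reachable M0 M -> starved M D -> ~~ D u.
Proof.
move=> hlive rM sD; apply/negP => Du.
have [M' rM' /forallP en] := hlive u M rM.
have [p lt _] := starved_reachable sD rM' Du.
by have := en p; rewrite leqNgt lt.
Qed.

Lemma dead_starved M : dead M -> starved M predT.
Proof. by move=> dM u _; have /enabledPn [p lt] := dM u; exists p. Qed.

Section Residual.
Hypotheses (hom : homogeneous Wpre) (one_shared : #|[set p | shared p]| <= 1)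
  (wmg : forall p, ~~ shared p -> (#|inputs p| <= 1) && (#|outputs p| <= 1)).
Variables (M1 M : P -> nat) (Z : T -> nat).
Hypotheses (eqZ : state_equation M1 Z M) (deadM : dead M)
  (blockedZ : forall u, 0 < Z u -> ~~ enabled M1 u).

Lemma residual_shared_underflow s u0 : shared s -> M1 s < Wpre s u0 -> dead M1.
Proof.
move=> ss lt_s t; case: (posnP (Z t)) => [Zt | /blockedZ //].
have /enabledPn [p lt_p] := deadM t; apply/enabledPn; exists p.
have [sp | nsp] := boolP (shared p).
  move: lt_p; rewrite (shared_eq one_shared sp ss) => lt_st.
  by rewrite (@hom s t u0) ?inE //; lia.
have /andP [_ out1] := wmg nsp.
have pt : 0 < Wpre p t by lia.
by have := eqZ p; rewrite (outflow_single Z out1 pt) Zt muln0 addn0; lia.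
Qed.

Lemma residual_support_starved :
  (forall s u, shared s -> Wpre s u <= M1 s) -> starved M1 (fun u => 0 < Z u).
Proof.
move=> shared_ok v Zv; have /enabledPn [p lt_p] := blockedZ Zv.
have nsp : ~~ shared p by apply/negP => /(shared_ok p v); lia.
have /andP [in1 out1] := wmg nsp.
exists p => // t tp; rewrite lt0n; apply/negP => /eqP Zt.
have pv : 0 < Wpre p v by lia.
have := eqZ p; rewrite (inflow_single Z in1 tp) (outflow_single Z out1 pv) Zt muln0 addn0.
by have := leq_pmulr (Wpre p v) Zv; lia.
Qed.

Lemma residual_zero_dead : (forall u, Z u = 0) -> dead M1.
Proof.
move=> Z0 t; have /enabledPn [p lt] := deadM t; apply/enabledPn; exists p.
have := eqZ p; rewrite !big1 => [|u _|u _]; rewrite ?Z0 ?muln0 //; lia.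
Qed.

Lemma residual_dead_or_starved :
  dead M1 \/ (exists u, 0 < Z u) /\ starved M1 (fun u => 0 < Z u).
Proof.
have [/existsP [s /existsP [u0 /andP [ss lt_s]]] | /existsPn shared_ok] :=
  boolP [exists s, exists u0, shared s && (M1 s < Wpre s u0)].
  by left; apply: residual_shared_underflow ss lt_s.
have [/existsP [u Zu] | /existsPn Z0] := boolP [exists u, 0 < Z u].
  right; split; first by exists u.
  apply: residual_support_starved => s u' ss.
  by have /existsPn /(_ u') := shared_ok s; rewrite ss -leqNgt.
by left; apply: residual_zero_dead => u; have := Z0 u; rewrite lt0n negbK => /eqP.
Qed.

End Residual.

Lemma live_no_dead_solution (t0 : T) M0 Y M : H1S_WMG_le Wpre Wpost -> live M0 ->
  state_equation M0 Y M -> ~ dead M.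
Proof.
case=> hom one_shared wmg hlive eqY deadM.
have [M1 [Z [r1 eqZ blockedZ]]] := state_equation_greedy eqY.
have [deadM1 | [[u Zu] sZ]] :=
  residual_dead_or_starved hom one_shared wmg eqZ deadM blockedZ.
  by have /negP := starved_not_live t0 hlive r1 (dead_starved deadM1).
by have /negP := starved_not_live u hlive r1 sZ.
Qed.

Definition count_bounded (M : P -> nat) (u : T) : Prop :=
  exists b, forall M' X, parikh_reach M M' X -> X u <= b.

Definition inflow_bounded (M : P -> nat) (p : P) : Prop :=
  exists b, forall M' X, parikh_reach M M' X -> \sum_t Wpost t p * X t <= b.

Definition vertex_bounded (M : P -> nat) (x : P + T) : Prop :=
  match x with inl p => inflow_bounded M p | inr u => count_bounded M u end.

Lemma count_bounded_output M p v :
  inflow_bounded M p -> 0 < Wpre p v -> count_bounded M v.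
Proof.
move=> [b hb] pv; exists (M p + b) => M' X r.
have := parikh_state_equation r p; have := hb _ _ r.
have /= := leq_sum_term (fun t => Wpre p t * X t) v.
by have := leq_pmull (X v) pv; lia.
Qed.

Lemma inflow_bounded_input M p u :
  #|inputs p| <= 1 -> 0 < Wpost u p -> count_bounded M u -> inflow_bounded M p.
Proof.
move=> in1 up [b hb]; exists (Wpost u p * b) => M' X r.
by rewrite (inflow_single X in1 up) leq_mul2l (hb _ _ r) orbT.
Qed.

Lemma vertex_bounded_arc (keep : pred P) M : (forall p, keep p -> #|inputs p| <= 1) ->
  forall x y, net_arc Wpre Wpost keep x y -> vertex_bounded M x -> vertex_bounded M y.
Proof.
move=> hin [p|u] [p'|v] //= /andP [kp w] bx.
  exact: count_bounded_output bx w.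
exact: inflow_bounded_input (hin _ kp) w bx.
Qed.

Lemma count_never_enabled M t M' X :
  (forall M'', reachable M M'' -> ~~ enabled M'' t) -> parikh_reach M M' X -> X t = 0.
Proof.
move=> never; elim=> // M1 X1 u r IH en; rewrite IH; case: eqP => [eq_tu|//].
by have := never _ (parikh_reachable r); rewrite eq_tu en.
Qed.

Lemma total_count_bounded M : (forall u, count_bounded M u) ->
  exists B, forall M' X, parikh_reach M M' X -> \sum_u X u <= B.
Proof.
move=> /fin_all_exists [b hb]; exists (\sum_u b u) => M' X r.
by apply: leq_sum => u _; apply: hb r.
Qed.

Lemma dead_reachable_of_bounded M B :
  (forall M' X, parikh_reach M M' X -> \sum_u X u <= B) ->
  exists2 Md, reachable M Md & dead Md.
Proof.
move=> hB; suff run_to_dead k M' X : parikh_reach M M' X -> B - \sum_u X u < k ->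
    exists2 Md, reachable M Md & dead Md.
  by apply: (run_to_dead B.+1 M (fun _ => 0)); [exact: parikh_refl | lia].
elim: k M' X => // k IH M' X r lt_k.
have [/existsP [u en] | /existsPn deadM'] := boolP [exists u, enabled M' u].
  have r' := parikh_step r en; have := hB _ _ r'; rewrite sum_add_delta => le_B.
  by apply: IH r' _; rewrite sum_add_delta; lia.
by exists M'; [exact: parikh_reachable r | exact: deadM'].
Qed.

Lemma live_of_no_reachable_dead M0 (keep : pred P) :
  (forall p, keep p -> #|inputs p| <= 1) -> strongly_connected_on Wpre Wpost keep ->
  (forall M, reachable M0 M -> ~ dead M) -> live M0.
Proof.
move=> hin sc no_dead t M' rM'; apply: NNPP => never_t.
have never M'' : reachable M' M'' -> ~~ enabled M'' t.
  by move=> r; apply/negP => en; apply: never_t; exists M''.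
have bounded_t : count_bounded M' t.
  by exists 0 => M'' X r; rewrite (count_never_enabled never r).
have bounded u : count_bounded M' u.
  exact: (connect_preserved (Q := vertex_bounded M') (vertex_bounded_arc hin)
            (sc (inr t) (inr u) isT isT) bounded_t).
have [B hB] := total_count_bounded bounded.
have [Md rMd deadMd] := dead_reachable_of_bounded hB.
exact: no_dead (reachable_trans rM' rMd) deadMd.
Qed.

Lemma strongly_connected_on_eq (keep keep' : pred P) : keep =1 keep' ->
  strongly_connected_on Wpre Wpost keep -> strongly_connected_on Wpre Wpost keep'.
Proof.
move=> eqk sc x y kx ky.
have eq_arc : net_arc Wpre Wpost keep =2 net_arc Wpre Wpost keep'.
  by case=> [p|u] [p'|v] //=; rewrite eqk.
rewrite -(eq_connect eq_arc); apply: sc.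
  by case: x kx => //= p; rewrite eqk.
by case: y ky => //= p; rewrite eqk.
Qed.

Lemma strongly_connected_nonshared : #|[set p | shared p]| <= 1 ->
  strongly_connected Wpre Wpost ->
  (forall s, shared s -> strongly_connected_on Wpre Wpost (predC1 s)) ->
  strongly_connected_on Wpre Wpost (fun p => ~~ shared p).
Proof.
move=> one_shared sc sc_s.
have [/existsP [s ss] | /existsPn none] := boolP [exists s, shared s].
  apply: strongly_connected_on_eq (sc_s s ss) => p /=.
  have [sp | nsp] := boolP (shared p); first by rewrite (shared_eq one_shared sp ss) eqxx.
  by apply: contraNneq nsp => ->.
by apply: strongly_connected_on_eq sc => p; rewrite /= (negbTE (none p)).
Qed.

End PetriNet.

Local Open Scope ring_scope.

Lemma state_equation_int (P T : finType) (Wpre : P -> T -> nat)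
    (Wpost : T -> P -> nat) (M0 M : P -> nat) (Y : T -> nat) :
  (forall p, (M p)%:Z = (M0 p)%:Z + \sum_(t : T) incidence Wpre Wpost p t * (Y t)%:Z) <->
  state_equation Wpre Wpost M0 Y M.
Proof.
have sumZ p : \sum_(t : T) incidence Wpre Wpost p t * (Y t)%:Z =
    (\sum_t Wpost t p * Y t)%N%:Z - (\sum_t Wpre p t * Y t)%N%:Z.
  rewrite !(big_morph Posz PoszD (erefl 0%:Z)) -sumrB.
  by apply: eq_bigr => t _; rewrite /incidence mulrBl !PoszM.
by split=> eqY p; have := eqY p; rewrite sumZ; lia.
Qed.

Theorem mainTheorem7 (P T : finType) (Wpre : P -> T -> nat)
    (Wpost : T -> P -> nat) (M0 : P -> nat) :
  nontrivial P T ->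
  strongly_connected Wpre Wpost ->
  H1S_WMG_le Wpre Wpost ->
  (forall s : P, shared Wpre s -> strongly_connected_on Wpre Wpost (predC1 s)) ->
  live Wpre Wpost M0 <->
  ~ (exists (M : P -> nat) (Y : T -> nat),
       (forall p, (M p)%:Z = (M0 p)%:Z + \sum_(t : T) incidence Wpre Wpost p t * (Y t)%:Z)
       /\ (forall t, ~~ enabled Wpre M t)).
Proof.
move=> [_ /card_gt0P [t0 _]] sc hH sc_s; have [_ one_shared wmg] := hH.
split=> [hlive [M [Y [/state_equation_int eqY deadM]]] | no_dead].
  exact: (live_no_dead_solution t0 hH hlive eqY deadM).
apply: (@live_of_no_reachable_dead _ _ _ _ _ (fun p => ~~ shared Wpre p)).
- by move=> p /wmg /andP [].
- exact: strongly_connected_nonshared.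
- move=> M /reachable_parikh [X /parikh_state_equation eqX] deadM.
  by apply: no_dead; exists M, X; split=> //; apply/state_equation_int.
Qed.
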